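(* Let $(F,G,H)$ be an admissible triple, let $\Omega_{\mathfrak{A}}=(\mathscr{M},\langle\cdot,\cdot\rangle_{\mathscr{M}},\mathsf{D}_{\mathscr{M}},\mathfrak{A},\mathsf{L}_{\mathfrak{A}})$ and $\Omega_{\mathfrak{B}}=(\mathscr{N},\langle\cdot,\cdot\rangle_{\mathscr{N}},\mathsf{D}_{\mathscr{N}},\mathfrak{B},\mathsf{L}_{\mathfrak{B}})$ be metrized quantum vector bundles of type $(F,G,H)$, and let $\gamma=(\Omega_{\mathfrak{A}},\Omega_{\mathfrak{B}},\mathfrak{D},x,\pi_{\mathfrak{A}},\pi_{\mathfrak{B}},(\omega_j)_{j\in J},(\eta_j)_{j\in J})$ be a modular bridge from $\Omega_{\mathfrak{A}}$ to $\Omega_{\mathfrak{B}}$. If $\omega\in\mathscr{M}$ with $\mathsf{D}_{\mathscr{M}}(\omega)\le1$ and $j\in J$ satisfies $\mathrm{k}_{\Omega_{\mathfrak{A}}}(\omega,\omega_j)\le\iota(\gamma)$, then $\mathrm{dn}_\gamma(\omega,\eta_j)\le\rho(\gamma)$; the symmetric statement (with the roles of $\Omega_{\mathfrak{A}}$ and $\Omega_{\mathfrak{B}}$, and of anchors and co-anchors, exchanged) also holds. Consequently $$\max\left\{\begin{array}{l}\sup_{a\in\mathfrak{sa}(\mathfrak{A}),\mathsf{L}_{\mathfrak{A}}(a)\le1}\ \inf_{b\in\mathfrak{sa}(\mathfrak{B}),\mathsf{L}_{\mathfrak{B}}(b)\le1}\mathrm{bn}_\gamma(a,b),\\ \sup_{b\in\mathfrak{sa}(\mathfrak{B}),\mathsf{L}_{\mathfrak{B}}(b)\le1}\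 \inf_{a\in\mathfrak{sa}(\mathfrak{A}),\mathsf{L}_{\mathfrak{A}}(a)\le1}\mathrm{bn}_\gamma(a,b),\\ \sup_{\omega\in\mathscr{D}_1(\Omega_{\mathfrak{A}})}\ \inf_{\eta\in\mathscr{D}_1(\Omega_{\mathfrak{B}})}\mathrm{dn}_\gamma(\omega,\eta),\\ \sup_{\eta\in\mathscr{D}_1(\Omega_{\mathfrak{B}})}\ \inf_{\omega\in\mathscr{D}_1(\Omega_{\mathfrak{A}})}\mathrm{dn}_\gamma(\omega,\eta)\end{array}\right\}\le\rho(\gamma).$$
   Context: Notation: for a unital C*-algebra $\mathfrak{A}$, $\mathfrak{sa}(\mathfrak{A})$ denotes the set of self-adjoint elements and $\mathscr{S}(\mathfrak{A})$ the state space; $\Re a=(a+a^* )/2$, $\Im a=(a-a^* )/(2i)$; $a\circ b=(ab+ba)/2$, $\{a,b\}=(ab-ba)/(2i)$. Convention: a seminorm $\mathsf{L}$ defined on a subspace $\mathrm{dom}(\mathsf{L})$ is extended by $\infty$ outside it, with $0\cdot\infty=0$. A function $F:[0,\infty)^4\to[0,\infty)$ is admissible if it is nondecreasing for the product order and $x_1x_3+x_2x_4\le F(x_1,x_2,x_3,x_4)$. An $F$-quasi-Leibniz quantum compact metric space $(\mathfrak{A},\mathsf{L})$ is a unital C*-algebra $\mathfrak{A}$ with a seminorm $\mathsf{L}$ on a dense subspace $\mathrm{dom}(\mathsf{L})\subseteq\mathfrak{sa}(\mathfrak{A})$ closed under $\circ$ and $\{\cdot,\cdot\}$, such that: (i)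 $\{a\in\mathrm{dom}(\mathsf{L}):\mathsf{L}(a)=0\}=\mathbb{R}1_{\mathfrak{A}}$; (ii) $\mathrm{mk}_{\mathsf{L}}(\varphi,\psi)=\sup\{|\varphi(a)-\psi(a)|:a\in\mathfrak{sa}(\mathfrak{A}),\mathsf{L}(a)\le1\}$ metrizes the weak* topology on $\mathscr{S}(\mathfrak{A})$; (iii) $\{a:\mathsf{L}(a)\le1\}$ is norm closed; (iv) $\max\{\mathsf{L}(a\circ b),\mathsf{L}(\{a,b\})\}\le F(\|a\|,\|b\|,\mathsf{L}(a),\mathsf{L}(b))$ for $a,b\in\mathrm{dom}(\mathsf{L})$. A triple $(F,G,H)$ is admissible if $F$ is admissible, $G:[0,\infty)^3\to[0,\infty)$ is nondecreasing in each variable with $(x+y)z\le G(x,y,z)$, and $H:[0,\infty)^2\to[0,\infty)$ is nondecreasing in each variable with $2xy\le H(x,y)$. A left Hilbert $\mathfrak{A}$-module $(\mathscr{M},\langle\cdot,\cdot\rangle_{\mathscr{M}})$ is a left $\mathfrak{A}$-module with a map $\langle\cdot,\cdot\rangle_{\mathscr{M}}:\mathscr{M}\times\mathscr{M}\to\mathfrak{A}$, linear in the first and conjugate-linear in the second variable, with $\langle a\omega,\eta\rangle=a\langle\omega,\eta\rangle$, $\langle\omega,\eta\rangle^*=\langle\eta,\omega\rangle$, $\langle\omega,\omega\rangle\ge0$ with equality only for $\omega=0$, and complete for $\|\omega\|_{\mathscr{M}}=\|\langle\omega,\omega\rangle_{\mathscr{M}}\|_{\mathfrak{A}}^{1/2}$.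 A metrized quantum vector bundle of type $(F,G,H)$ is a tuple $\Omega=(\mathscr{M},\langle\cdot,\cdot\rangle_{\mathscr{M}},\mathsf{D},\mathfrak{A},\mathsf{L})$ where $(\mathfrak{A},\mathsf{L})$ is an $F$-quasi-Leibniz quantum compact metric space (the base space), $(\mathscr{M},\langle\cdot,\cdot\rangle_{\mathscr{M}})$ is a left Hilbert $\mathfrak{A}$-module, and $\mathsf{D}$ (the D-norm) is a norm on a dense complex subspace $\mathrm{dom}(\mathsf{D})$ of $\mathscr{M}$ (extended by $\infty$) such that: (1) $\|\omega\|_{\mathscr{M}}\le\mathsf{D}(\omega)$; (2) $\{\omega:\mathsf{D}(\omega)\le1\}$ is compact for $\|\cdot\|_{\mathscr{M}}$; (3) $\mathsf{D}(a\omega)\le G(\|a\|_{\mathfrak{A}},\mathsf{L}(a),\mathsf{D}(\omega))$ for $a\in\mathfrak{sa}(\mathfrak{A})$, $\omega\in\mathscr{M}$; (4) $\max\{\mathsf{L}(\Re\langle\omega,\eta\rangle_{\mathscr{M}}),\mathsf{L}(\Im\langle\omega,\eta\rangle_{\mathscr{M}})\}\le H(\mathsf{D}(\omega),\mathsf{D}(\eta))$. For $r\ge0$, $\mathscr{D}_r(\Omega)=\{\omega:\mathsf{D}(\omega)\le r\}$. The modular Monge–Kantorovich metric is $\mathrm{k}_\Omega(\omega,\eta)=\sup\{\|\langle\omega,\xi\rangle_{\mathscr{M}}-\langle\eta,\xi\rangle_{\mathscr{M}}\|_{\mathfrak{A}}:\xi\in\mathscr{D}_1(\Omega)\}$. Hausdorff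 distance: for a pseudo-metric $d$ on a set $X$ and nonempty $A,B\subseteq X$, $\mathrm{Haus}_d(A,B)=\max\{\sup_{a\in A}\inf_{b\in B}d(a,b),\sup_{b\in B}\inf_{a\in A}d(a,b)\}$. For a unital C*-algebra $\mathfrak{D}$ and $x\in\mathfrak{D}$, the 1-level set is $\mathscr{S}_1(\mathfrak{D}|x)=\{\varphi\in\mathscr{S}(\mathfrak{D}):\varphi((1-x)^*(1-x))=\varphi((1-x)(1-x)^* )=0\}$. Modular bridge: given metrized quantum vector bundles $\Omega_{\mathfrak{A}}=(\mathscr{M},\langle\cdot,\cdot\rangle_{\mathscr{M}},\mathsf{D}_{\mathscr{M}},\mathfrak{A},\mathsf{L}_{\mathfrak{A}})$ and $\Omega_{\mathfrak{B}}=(\mathscr{N},\langle\cdot,\cdot\rangle_{\mathscr{N}},\mathsf{D}_{\mathscr{N}},\mathfrak{B},\mathsf{L}_{\mathfrak{B}})$, a modular bridge from $\Omega_{\mathfrak{A}}$ to $\Omega_{\mathfrak{B}}$ is a tuple $\gamma=(\Omega_{\mathfrak{A}},\Omega_{\mathfrak{B}},\mathfrak{D},x,\pi_{\mathfrak{A}},\pi_{\mathfrak{B}},(\omega_j)_{j\in J},(\eta_j)_{j\in J})$ where $\mathfrak{D}$ is a unital C*-algebra, $x\in\mathfrak{D}$ (the pivot) satisfies $\|x\|_{\mathfrak{D}}=1$ and $\mathscr{S}_1(\mathfrak{D}|x)\neq\emptyset$, $\pi_{\mathfrak{A}}:\mathfrak{A}\to\mathfrak{D}$ and $\pi_{\mathfrak{B}}:\mathfrak{B}\to\mathfrak{D}$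 are unital injective $*$-morphisms, $J$ is a nonempty set, $\mathsf{D}_{\mathscr{M}}(\omega_j)\le1$ (anchors) and $\mathsf{D}_{\mathscr{N}}(\eta_j)\le1$ (co-anchors) for all $j\in J$. Associated quantities: the bridge seminorm $\mathrm{bn}_\gamma(a,b)=\|\pi_{\mathfrak{A}}(a)x-x\pi_{\mathfrak{B}}(b)\|_{\mathfrak{D}}$ for $a\in\mathfrak{A},b\in\mathfrak{B}$; the basic reach $\rho_\flat(\gamma)=\max\{\sup_{a\in\mathfrak{sa}(\mathfrak{A}),\mathsf{L}_{\mathfrak{A}}(a)\le1}\inf_{b\in\mathfrak{sa}(\mathfrak{B}),\mathsf{L}_{\mathfrak{B}}(b)\le1}\mathrm{bn}_\gamma(a,b),\ \sup_{b\in\mathfrak{sa}(\mathfrak{B}),\mathsf{L}_{\mathfrak{B}}(b)\le1}\inf_{a\in\mathfrak{sa}(\mathfrak{A}),\mathsf{L}_{\mathfrak{A}}(a)\le1}\mathrm{bn}_\gamma(a,b)\}$; the height $\varsigma(\gamma)=\max\{\mathrm{Haus}_{\mathrm{mk}_{\mathsf{L}_{\mathfrak{A}}}}(\mathscr{S}(\mathfrak{A}),\{\psi\circ\pi_{\mathfrak{A}}:\psi\in\mathscr{S}_1(\mathfrak{D}|x)\}),\ \mathrm{Haus}_{\mathrm{mk}_{\mathsf{L}_{\mathfrak{B}}}}(\mathscr{S}(\mathfrak{B}),\{\psi\circ\pi_{\mathfrak{B}}:\psi\in\mathscr{S}_1(\mathfrak{D}|x)\})\}$; the deck seminorm on $\mathscr{M}\oplus\mathscr{N}$,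 $\mathrm{dn}_\gamma(\omega,\eta)=\sup_{k\in J}\max\{\mathrm{bn}_\gamma(\langle\omega,\omega_k\rangle_{\mathscr{M}},\langle\eta,\eta_k\rangle_{\mathscr{N}}),\ \mathrm{bn}_\gamma(\langle\omega_k,\omega\rangle_{\mathscr{M}},\langle\eta_k,\eta\rangle_{\mathscr{N}})\}$; the modular reach $\rho_\sharp(\gamma)=\sup_{j\in J}\mathrm{dn}_\gamma(\omega_j,\eta_j)$; the imprint $\iota(\gamma)=\max\{\mathrm{Haus}_{\mathrm{k}_{\Omega_{\mathfrak{A}}}}(\{\omega_j:j\in J\},\mathscr{D}_1(\Omega_{\mathfrak{A}})),\ \mathrm{Haus}_{\mathrm{k}_{\Omega_{\mathfrak{B}}}}(\{\eta_j:j\in J\},\mathscr{D}_1(\Omega_{\mathfrak{B}}))\}$; the reach $\rho(\gamma)=\max\{\rho_\flat(\gamma),\rho_\sharp(\gamma)+\iota(\gamma)\}$; the length $\lambda(\gamma)=\max\{\varsigma(\gamma),\rho(\gamma)\}$. *)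

From Stdlib Require Import Reals List Classical ClassicalEpsilon.
Open Scope R_scope.
Set Implicit Arguments.

Record C := mkC { Cre : R; Cim : R }.
Definition C0 : C := mkC 0 0.
Definition C1 : C := mkC 1 0.
Definition RtoC (r : R) : C := mkC r 0.
Definition Cadd (z w : C) : C := mkC (Cre z + Cre w) (Cim z + Cim w).
Definition Copp (z : C) : C := mkC (- Cre z) (- Cim z).
Definition Cmul (z w : C) : C :=
  mkC (Cre z * Cre w - Cim z * Cim w) (Cre z * Cim w + Cim z * Cre w).
Definition Cconj (z : C) : C := mkC (Cre z) (- Cim z).
Definition Cmod (z : C) : R := sqrt (Cre z * Cre z + Cim z * Cim z).

Inductive Rbar := Finite (r : R) | p_infty | m_infty.

Definition Rbar_le (x y : Rbar) : Prop :=
  match x, y with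
  | m_infty, _ => True
  | _, p_infty => True
  | p_infty, _ => False
  | _, m_infty => False
  | Finite a, Finite b => a <= b
  end.

Definition Rbar_lt (x y : Rbar) : Prop := Rbar_le x y /\ x <> y.

Definition Rbar_opp (x : Rbar) : Rbar :=
  match x with Finite r => Finite (- r) | p_infty => m_infty | m_infty => p_infty end.

(* +oo absorbs (the convention for +oo + -oo is irrelevant here: all
   quantities below are >= 0). *)
Definition Rbar_plus (x y : Rbar) : Rbar :=
  match x, y with
  | p_infty, _ => p_infty
  | _, p_infty => p_infty
  | m_infty, _ => m_infty
  | _, m_infty => m_infty
  | Finite a, Finite b => Finite (a + b)
  end.

Definition Rbar_max (x y : Rbar) : Rbar :=
  match x, y with
  | p_infty, _ => p_infty
  | _, p_infty => p_infty
  | m_infty, z => z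
  | z, m_infty => z
  | Finite a, Finite b => Finite (Rmax a b)
  end.

Definition Rbar_sup (E : Rbar -> Prop) : Rbar :=
  match excluded_middle_informative (E p_infty) with
  | left _ => p_infty
  | right _ =>
    match excluded_middle_informative (exists r, E (Finite r)) with
    | right _ => m_infty
    | left Hne =>
      match excluded_middle_informative (bound (fun r => E (Finite r))) with
      | left Hb => Finite (proj1_sig (completeness (fun r => E (Finite r)) Hb Hne))
      | right _ => p_infty
      end
    end
  end.

Definition Rbar_inf (E : Rbar -> Prop) : Rbar :=
  Rbar_opp (Rbar_sup (fun y => E (Rbar_opp y))).

Definition supf {X : Type} (P : X -> Prop) (f : X -> Rbar) : Rbar :=
  Rbar_sup (fun y => exists x, P x /\ y = f x).
Definition inff {X : Type} (P : X -> Prop) (f : X -> Rbar) : Rbar :=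
  Rbar_inf (fun y => exists x, P x /\ y = f x).

Definition Haus {X : Type} (d : X -> X -> Rbar) (A B : X -> Prop) : Rbar :=
  Rbar_max (supf A (fun a => inff B (fun b => d a b)))
           (supf B (fun b => inff A (fun a => d a b))).

Record CStarAlg := {
  ca :> Type;
  czero : ca;
  cadd : ca -> ca -> ca;
  copp : ca -> ca;
  cscal : C -> ca -> ca;
  cmul : ca -> ca -> ca;
  cone : ca;
  cstar : ca -> ca;
  cnorm : ca -> R;
  cadd_assoc : forall a b c, cadd a (cadd b c) = cadd (cadd a b) c;
  cadd_comm : forall a b, cadd a b = cadd b a;
  cadd_0 : forall a, cadd a czero = a;
  cadd_opp : forall a, cadd a (copp a) = czero;
  cscal_assoc : forall z w a, cscal z (cscal w a) = cscal (Cmul z w) a;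
  cscal_1 : forall a, cscal C1 a = a;
  cscal_distr_l : forall z a b, cscal z (cadd a b) = cadd (cscal z a) (cscal z b);
  cscal_distr_r : forall z w a, cscal (Cadd z w) a = cadd (cscal z a) (cscal w a);
  cmul_assoc : forall a b c, cmul a (cmul b c) = cmul (cmul a b) c;
  cmul_1_l : forall a, cmul cone a = a;
  cmul_1_r : forall a, cmul a cone = a;
  cmul_add_l : forall a b c, cmul (cadd a b) c = cadd (cmul a c) (cmul b c);
  cmul_add_r : forall a b c, cmul a (cadd b c) = cadd (cmul a b) (cmul a c);
  cmul_scal_l : forall z a b, cmul (cscal z a) b = cscal z (cmul a b);
  cmul_scal_r : forall z a b, cmul a (cscal z b) = cscal z (cmul a b);
  cstar_invol : forall a, cstar (cstar a) = a;
  cstar_add : forall a b, cstar (cadd a b) = cadd (cstar a) (cstar b);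
  cstar_scal : forall z a, cstar (cscal z a) = cscal (Cconj z) (cstar a);
  cstar_mul : forall a b, cstar (cmul a b) = cmul (cstar b) (cstar a);
  cnorm_nonneg : forall a, 0 <= cnorm a;
  cnorm_zero : forall a, cnorm a = 0 <-> a = czero;
  cnorm_scal : forall z a, cnorm (cscal z a) = Cmod z * cnorm a;
  cnorm_triangle : forall a b, cnorm (cadd a b) <= cnorm a + cnorm b;
  cnorm_mul : forall a b, cnorm (cmul a b) <= cnorm a * cnorm b;
  cnorm_cstar : forall a, cnorm (cmul (cstar a) a) = cnorm a * cnorm a;
  ccomplete : forall u : nat -> ca,
    (forall eps, 0 < eps -> exists N, forall m n, (N <= m)%nat -> (N <= n)%nat ->
        cnorm (cadd (u m) (copp (u n))) < eps) ->
    exists l, forall eps, 0 < eps -> exists N, forall n, (N <= n)%nat ->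
        cnorm (cadd (u n) (copp l)) < eps
}.

Arguments czero {_}. Arguments cadd {_}. Arguments copp {_}. Arguments cscal {_}.
Arguments cmul {_}. Arguments cone {_}. Arguments cstar {_}. Arguments cnorm {_}.

Section CStarDefs.
Variable A : CStarAlg.

Definition csub (a b : A) : A := cadd a (copp b).
Definition sa (a : A) : Prop := cstar a = a.
Definition invertible (a : A) : Prop :=
  exists b, cmul a b = cone /\ cmul b a = cone.
Definition positive (a : A) : Prop :=
  sa a /\ forall z : C, ~ (Cim z = 0 /\ 0 <= Cre z) -> invertible (csub a (cscal z cone)).
(* Re a = (a + star a)/2,  Im a = (a - star a)/(2i) = (-i/2)(a - star a) *)
Definition ReA (a : A) : A := cscal (RtoC (/ 2)) (cadd a (cstar a)).
Definition ImA (a : A) : A := cscal (mkC 0 (- / 2)) (csub a (cstar a)).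
Definition jordan (a b : A) : A := cscal (RtoC (/ 2)) (cadd (cmul a b) (cmul b a)).
Definition lie (a b : A) : A := cscal (mkC 0 (- / 2)) (csub (cmul a b) (cmul b a)).

Definition state (phi : A -> C) : Prop :=
  (forall a b, phi (cadd a b) = Cadd (phi a) (phi b)) /\
  (forall z a, phi (cscal z a) = Cmul z (phi a)) /\
  (forall a, positive a -> Cim (phi a) = 0 /\ 0 <= Cre (phi a)) /\
  phi cone = C1.

Definition level1 (x : A) (phi : A -> C) : Prop :=
  state phi /\
  phi (cmul (cstar (csub cone x)) (csub cone x)) = C0 /\
  phi (cmul (csub cone x) (cstar (csub cone x))) = C0.

(* Monge-Kantorovich metric associated with the seminorm l defined on dom
   (extended by +oo outside dom, so L(a) <= 1 means dom a /\ l a <= 1) *)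
Definition mk (dom : A -> Prop) (l : A -> R) (phi psi : A -> C) : Rbar :=
  supf (fun a => sa a /\ dom a /\ l a <= 1)
       (fun a => Finite (Cmod (Cadd (phi a) (Copp (psi a))))).

Definition weakstar_open (U : (A -> C) -> Prop) : Prop :=
  forall phi, U phi -> exists (l : list A) (eps : R), 0 < eps /\
    forall psi, state psi ->
      (forall a, In a l -> Cmod (Cadd (psi a) (Copp (phi a))) < eps) -> U psi.

Definition metric_open (d : (A -> C) -> (A -> C) -> Rbar) (U : (A -> C) -> Prop) : Prop :=
  forall phi, U phi -> exists eps, 0 < eps /\
    forall psi, state psi -> Rbar_lt (d phi psi) (Finite eps) -> U psi.

Definition metrizes_weakstar (d : (A -> C) -> (A -> C) -> Rbar) : Prop :=
  (forall phi psi, state phi -> state psi -> exists r, d phi psi = Finite r) /\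
  (forall U : (A -> C) -> Prop, (forall phi, U phi -> state phi) ->
      (metric_open d U <-> weakstar_open U)).

End CStarDefs.

Arguments sa {A}. Arguments csub {A}. Arguments positive {A}. Arguments ReA {A}.
Arguments ImA {A}. Arguments jordan {A}. Arguments lie {A}. Arguments invertible {A}.
Arguments state {A}. Arguments level1 {A}.

Definition admissibleF (F : R -> R -> R -> R -> R) : Prop :=
  (forall x1 x2 x3 x4, 0 <= x1 -> 0 <= x2 -> 0 <= x3 -> 0 <= x4 ->
     0 <= F x1 x2 x3 x4 /\ x1 * x3 + x2 * x4 <= F x1 x2 x3 x4) /\
  (forall x1 x2 x3 x4 y1 y2 y3 y4,
     0 <= x1 -> 0 <= x2 -> 0 <= x3 -> 0 <= x4 ->
     x1 <= y1 -> x2 <= y2 -> x3 <= y3 -> x4 <= y4 ->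
     F x1 x2 x3 x4 <= F y1 y2 y3 y4).

Definition admissible_triple (F : R -> R -> R -> R -> R) (G : R -> R -> R -> R)
  (H : R -> R -> R) : Prop :=
  admissibleF F /\
  (forall x y z, 0 <= x -> 0 <= y -> 0 <= z -> 0 <= G x y z /\ (x + y) * z <= G x y z) /\
  (forall x y z x' y' z', 0 <= x -> 0 <= y -> 0 <= z ->
     x <= x' -> y <= y' -> z <= z' -> G x y z <= G x' y' z') /\
  (forall x y, 0 <= x -> 0 <= y -> 0 <= H x y /\ 2 * x * y <= H x y) /\
  (forall x y x' y', 0 <= x -> 0 <= y -> x <= x' -> y <= y' -> H x y <= H x' y').

(* The seminorm L is given by its domain ldom and its (real) values lr *)
(* on ldom; L = +oo outside ldom.                                      *)
Record QCMS (F : R -> R -> R -> R -> R) (A : CStarAlg) := {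
  ldom : A -> Prop;
  lr : A -> R;
  ldom_sa : forall a, ldom a -> sa a;
  ldom_zero : ldom czero;
  ldom_add : forall a b, ldom a -> ldom b -> ldom (cadd a b);
  ldom_scal : forall (r : R) a, ldom a -> ldom (cscal (RtoC r) a);
  ldom_dense : forall a, sa a -> forall eps, 0 < eps ->
      exists b, ldom b /\ cnorm (csub a b) < eps;
  lr_nonneg : forall a, ldom a -> 0 <= lr a;
  lr_scal : forall (r : R) a, ldom a -> lr (cscal (RtoC r) a) = Rabs r * lr a;
  lr_triangle : forall a b, ldom a -> ldom b -> lr (cadd a b) <= lr a + lr b;
  ldom_jordan : forall a b, ldom a -> ldom b -> ldom (jordan a b);
  ldom_lie : forall a b, ldom a -> ldom b -> ldom (lie a b);
  lr_kernel : forall a, (ldom a /\ lr a = 0) <-> exists r : R, a = cscal (RtoC r) cone;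
  lr_mk : @metrizes_weakstar A (@mk A ldom lr);
  lr_closed : forall a, (forall eps, 0 < eps ->
      exists b, ldom b /\ lr b <= 1 /\ cnorm (csub a b) < eps) -> ldom a /\ lr a <= 1;
  lr_leibniz : forall a b, ldom a -> ldom b ->
      lr (jordan a b) <= F (cnorm a) (cnorm b) (lr a) (lr b) /\
      lr (lie a b) <= F (cnorm a) (cnorm b) (lr a) (lr b)
}.
Arguments ldom {F A}. Arguments lr {F A}.

Record HilbertModule (A : CStarAlg) := {
  mcar :> Type;
  mzero : mcar;
  madd : mcar -> mcar -> mcar;
  mopp : mcar -> mcar;
  mscal : C -> mcar -> mcar;
  act : A -> mcar -> mcar;
  inner : mcar -> mcar -> A;
  madd_assoc : forall u v w, madd u (madd v w) = madd (madd u v) w;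
  madd_comm : forall u v, madd u v = madd v u;
  madd_0 : forall u, madd u mzero = u;
  madd_opp : forall u, madd u (mopp u) = mzero;
  mscal_assoc : forall z w u, mscal z (mscal w u) = mscal (Cmul z w) u;
  mscal_1 : forall u, mscal C1 u = u;
  mscal_distr_l : forall z u v, mscal z (madd u v) = madd (mscal z u) (mscal z v);
  mscal_distr_r : forall z w u, mscal (Cadd z w) u = madd (mscal z u) (mscal w u);
  act_add_l : forall a b u, act (cadd a b) u = madd (act a u) (act b u);
  act_add_r : forall a u v, act a (madd u v) = madd (act a u) (act a v);
  act_mul : forall a b u, act (cmul a b) u = act a (act b u);
  act_one : forall u, act cone u = u;
  act_scal : forall z a u, act (cscal z a) u = mscal z (act a u);
  act_mscal : forall z a u, act a (mscal z u) = mscal z (act a u);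
  inner_add_l : forall u v w, inner (madd u v) w = cadd (inner u w) (inner v w);
  inner_scal_l : forall z u v, inner (mscal z u) v = cscal z (inner u v);
  inner_add_r : forall u v w, inner u (madd v w) = cadd (inner u v) (inner u w);
  inner_scal_r : forall z u v, inner u (mscal z v) = cscal (Cconj z) (inner u v);
  inner_act : forall a u v, inner (act a u) v = cmul a (inner u v);
  inner_star : forall u v, cstar (inner u v) = inner v u;
  inner_pos : forall u, positive (inner u u);
  inner_def : forall u, inner u u = czero -> u = mzero;
  mcomplete : forall s : nat -> mcar,
    (forall eps, 0 < eps -> exists N, forall m n, (N <= m)%nat -> (N <= n)%nat ->
        sqrt (cnorm (inner (madd (s m) (mopp (s n))) (madd (s m) (mopp (s n))))) < eps) ->
    exists l, forall eps, 0 < eps -> exists N, forall n, (N <= n)%nat ->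
        sqrt (cnorm (inner (madd (s n) (mopp l)) (madd (s n) (mopp l)))) < eps
}.
Arguments mzero {A _}. Arguments madd {A _}. Arguments mopp {A _}. Arguments mscal {A _}.
Arguments act {A _}. Arguments inner {A _}.

Definition msub {A : CStarAlg} {M : HilbertModule A} (u v : M) : M := madd u (mopp v).
Definition mnorm {A : CStarAlg} {M : HilbertModule A} (u : M) : R := sqrt (cnorm (inner u u)).

Definition mopen {A : CStarAlg} {M : HilbertModule A} (U : M -> Prop) : Prop :=
  forall u, U u -> exists eps, 0 < eps /\ forall v, mnorm (msub v u) < eps -> U v.
Definition mcompact {A : CStarAlg} {M : HilbertModule A} (K : M -> Prop) : Prop :=
  forall (I : Type) (U : I -> M -> Prop), (forall i, mopen (U i)) ->
    (forall u, K u -> exists i, U i u) ->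
    exists l : list I, forall u, K u -> exists i, In i l /\ U i u.

(* The D-norm is given by its domain ddom and values dr on ddom;       *)
(* D = +oo outside ddom.                                               *)
Record MQVB (F : R -> R -> R -> R -> R) (G : R -> R -> R -> R) (H : R -> R -> R) := {
  balg : CStarAlg;
  bL : QCMS F balg;
  bmod : HilbertModule balg;
  ddom : bmod -> Prop;
  dr : bmod -> R;
  ddom_zero : ddom mzero;
  ddom_add : forall u v, ddom u -> ddom v -> ddom (madd u v);
  ddom_scal : forall z u, ddom u -> ddom (mscal z u);
  ddom_dense : forall u eps, 0 < eps -> exists v, ddom v /\ mnorm (msub u v) < eps;
  dr_nonneg : forall u, ddom u -> 0 <= dr u;
  dr_scal : forall z u, ddom u -> dr (mscal z u) = Cmod z * dr u;
  dr_triangle : forall u v, ddom u -> ddom v -> dr (madd u v) <= dr u + dr v;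
  dr_def : forall u, ddom u -> dr u = 0 -> u = mzero;
  dr_ge_norm : forall u, ddom u -> mnorm u <= dr u;
  dr_compact : mcompact (fun u => ddom u /\ dr u <= 1);
  dr_leibniz_act : forall (a : balg) u, sa a -> ldom bL a -> ddom u ->
      ddom (act a u) /\ dr (act a u) <= G (cnorm a) (lr bL a) (dr u);
  dr_leibniz_inner : forall u v, ddom u -> ddom v ->
      ldom bL (ReA (inner u v)) /\ ldom bL (ImA (inner u v)) /\
      lr bL (ReA (inner u v)) <= H (dr u) (dr v) /\
      lr bL (ImA (inner u v)) <= H (dr u) (dr v)
}.
Arguments balg {F G H}. Arguments bL {F G H}. Arguments bmod {F G H}.
Arguments ddom {F G H}. Arguments dr {F G H}.

Section BundleDefs.
Context {F : R -> R -> R -> R -> R} {G : R -> R -> R -> R} {H : R -> R -> R}.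

Definition D1 (O : MQVB F G H) (u : bmod O) : Prop := ddom O u /\ dr O u <= 1.

Definition kmod (O : MQVB F G H) (u v : bmod O) : Rbar :=
  supf (D1 O) (fun xi => Finite (cnorm (csub (inner u xi) (inner v xi)))).

Definition Lball (O : MQVB F G H) (a : balg O) : Prop :=
  sa a /\ ldom (bL O) a /\ lr (bL O) a <= 1.

Definition unital_inj_star_morphism {A B : CStarAlg} (pi : A -> B) : Prop :=
  (forall a b, pi (cadd a b) = cadd (pi a) (pi b)) /\
  (forall z a, pi (cscal z a) = cscal z (pi a)) /\
  (forall a b, pi (cmul a b) = cmul (pi a) (pi b)) /\
  (forall a, pi (cstar a) = cstar (pi a)) /\
  pi cone = cone /\
  (forall a b, pi a = pi b -> a = b).

Record ModBridge (OA OB : MQVB F G H) := {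
  brD : CStarAlg;
  pivot : brD;
  piA : balg OA -> brD;
  piB : balg OB -> brD;
  pivot_norm : cnorm pivot = 1;
  pivot_level : exists phi, level1 pivot phi;
  piA_morph : unital_inj_star_morphism piA;
  piB_morph : unital_inj_star_morphism piB;
  brJ : Type;
  brJ_ne : inhabited brJ;
  anchor : brJ -> bmod OA;
  coanchor : brJ -> bmod OB;
  anchor_D1 : forall j, D1 OA (anchor j);
  coanchor_D1 : forall j, D1 OB (coanchor j)
}.

Context {OA OB : MQVB F G H}.

Definition bn (g : ModBridge OA OB) (a : balg OA) (b : balg OB) : R :=
  cnorm (csub (cmul (piA g a) (pivot g)) (cmul (pivot g) (piB g b))).

Definition reach_flat (g : ModBridge OA OB) : Rbar :=
  Rbar_max (supf (Lball OA) (fun a => inff (Lball OB) (fun b => Finite (bn g a b))))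
           (supf (Lball OB) (fun b => inff (Lball OA) (fun a => Finite (bn g a b)))).

Definition dn (g : ModBridge OA OB) (u : bmod OA) (v : bmod OB) : Rbar :=
  supf (fun _ : brJ g => True) (fun k =>
    Finite (Rmax (bn g (inner u (anchor g k)) (inner v (coanchor g k)))
                 (bn g (inner (anchor g k) u) (inner (coanchor g k) v)))).

Definition reach_sharp (g : ModBridge OA OB) : Rbar :=
  supf (fun _ : brJ g => True) (fun j => dn g (anchor g j) (coanchor g j)).

Definition imprint (g : ModBridge OA OB) : Rbar :=
  Rbar_max (Haus (kmod OA) (fun u => exists j, u = anchor g j) (D1 OA))
           (Haus (kmod OB) (fun v => exists j, v = coanchor g j) (D1 OB)).

Definition reach (g : ModBridge OA OB) : Rbar :=
  Rbar_max (reach_flat g) (Rbar_plus (reach_sharp g) (imprint g)).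

End BundleDefs.

From Pilot Require Import Defs.
From Stdlib Require Import Reals Lra Lia Classical ClassicalEpsilon.
Open Scope R_scope.

(* Unital *-morphisms are contractive and the pivot has norm 1, so the bridge
   seminorm is 1-Lipschitz in each argument:
   [bn(a, b) <= bn(a', b') + |a - a'| + |b - b'|].  Applied to the inner products
   with the anchors, this gives [dn(omega, eta_j) <= dn(omega_j, eta_j) + k(omega, omega_j)
   <= rho_sharp + k(omega, omega_j)].  The imprint puts every [omega] in [D_1] within
   [iota + eps] of some anchor, whence [inf_eta dn(omega, eta) <= rho_sharp + iota].

   Contractivity is derived from the C*-identity: for self-adjoint [h] of norm 1/2,
   [1 - h^2] has a self-adjoint square root [w] commuting with [h] (a fixed point
   of a contraction), so [pi h + i pi w] has norm at most 1 and [|pi h| <= 2 |h|];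
   applying this to the powers [h^(2^n)] removes the factor 2. *)

(** * Extended reals *)

Lemma Rbar_le_refl x : Rbar_le x x.
Proof. destruct x; simpl; auto; lra. Qed.

Lemma Rbar_le_trans x y z : Rbar_le x y -> Rbar_le y z -> Rbar_le x z.
Proof. destruct x, y, z; simpl; auto; try lra; tauto. Qed.

Lemma Rbar_le_total x y : Rbar_le x y \/ Rbar_le y x.
Proof. destruct x, y; simpl; auto. lra. Qed.

Lemma Rbar_le_antisym x y : Rbar_le x y -> Rbar_le y x -> x = y.
Proof. destruct x, y; simpl; try tauto. intros; f_equal; lra. Qed.

Lemma Rbar_opp_le x y : Rbar_le (Rbar_opp x) (Rbar_opp y) <-> Rbar_le y x.
Proof. destruct x, y; simpl; split; auto; lra. Qed.

Lemma Rbar_opp_involutive x : Rbar_opp (Rbar_opp x) = x.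
Proof. destruct x; simpl; auto. f_equal; ring. Qed.

Lemma Rbar_sup_ub (E : Rbar -> Prop) y : E y -> Rbar_le y (Rbar_sup E).
Proof.
  intro Ey. unfold Rbar_sup.
  destruct (excluded_middle_informative (E p_infty)).
  { destruct y; simpl; auto. }
  destruct (excluded_middle_informative (exists r, E (Finite r))) as [Ne|Ne].
  - destruct (excluded_middle_informative (bound (fun r => E (Finite r)))) as [Hb|Hb].
    + destruct (completeness _ Hb Ne) as [l [Hu Hl]]; simpl.
      destruct y; simpl; auto; contradiction.
    + destruct y; simpl; auto.
  - destruct y; simpl; eauto.
Qed.

Lemma Rbar_sup_lub (E : Rbar -> Prop) z :
  (forall y, E y -> Rbar_le y z) -> Rbar_le (Rbar_sup E) z.
Proof.
  intro Hz. unfold Rbar_sup.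
  destruct (excluded_middle_informative (E p_infty)); [auto|].
  destruct (excluded_middle_informative (exists r, E (Finite r))) as [Ne|Ne]; [|simpl; auto].
  pose proof Ne as [r0 Er0].
  destruct (excluded_middle_informative (bound (fun r => E (Finite r)))) as [Hb|Hb].
  - destruct (completeness _ Hb Ne) as [l [Hu Hl]]; simpl.
    destruct z as [zz| |]; simpl; auto.
    + apply Hl. intros r Er. apply (Hz _ Er).
    + apply (Hz _ Er0).
  - destruct z as [zz| |]; simpl; auto.
    + apply Hb. exists zz. intros r Er. apply (Hz _ Er).
    + apply (Hz _ Er0).
Qed.

Lemma Rbar_inf_lb (E : Rbar -> Prop) y : E y -> Rbar_le (Rbar_inf E) y.
Proof.
  intro Ey. unfold Rbar_inf. rewrite <- Rbar_opp_le, Rbar_opp_involutive.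
  apply Rbar_sup_ub. rewrite Rbar_opp_involutive; exact Ey.
Qed.

Lemma Rbar_inf_glb (E : Rbar -> Prop) z :
  (forall y, E y -> Rbar_le z y) -> Rbar_le z (Rbar_inf E).
Proof.
  intro Hz. unfold Rbar_inf. rewrite <- Rbar_opp_le, Rbar_opp_involutive.
  apply Rbar_sup_lub. intros y Ey. rewrite <- Rbar_opp_le, Rbar_opp_involutive. auto.
Qed.

Lemma Rbar_inf_lt (E : Rbar -> Prop) c :
  Rbar_lt (Rbar_inf E) (Finite c) -> exists y, E y /\ Rbar_lt y (Finite c).
Proof.
  intros [Hle Hne]. apply NNPP. intro Hn. apply Hne, Rbar_le_antisym; [exact Hle|].
  apply Rbar_inf_glb. intros y Ey.
  destruct (Rbar_le_total (Finite c) y) as [L|L]; [exact L|].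
  destruct (classic (y = Finite c)) as [->|Ne]; [apply Rbar_le_refl|].
  exfalso. apply Hn. exists y. repeat split; auto.
Qed.

Lemma Rbar_le_of_lt_Finite x z :
  (forall t, Rbar_lt z (Finite t) -> Rbar_le x (Finite t)) -> Rbar_le x z.
Proof.
  intro Ht. destruct z as [zz| |]; simpl.
  - destruct x as [xx| |]; simpl; auto.
    + apply Rnot_lt_le. intro L.
      assert (Rbar_le (Finite xx) (Finite ((xx + zz) / 2))) as Hm.
      { apply Ht. split; [simpl; lra|]. intro E; injection E; lra. }
      simpl in Hm; lra.
    + apply (Ht (zz + 1)). split; [simpl; lra|]. intro E; injection E; lra.
  - destruct x; simpl; auto.
  - destruct x as [xx| |]; simpl; auto.
    + assert (Rbar_le (Finite xx) (Finite (xx - 1))) as Hm.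
      { apply Ht. split; simpl; auto. discriminate. }
      simpl in Hm; lra.
    + apply (Ht 0). split; simpl; auto. discriminate.
Qed.

Lemma Rbar_max_l x y : Rbar_le x (Rbar_max x y).
Proof. destruct x, y; simpl; auto; try lra. apply Rmax_l. Qed.

Lemma Rbar_max_r x y : Rbar_le y (Rbar_max x y).
Proof. destruct x, y; simpl; auto; try lra. apply Rmax_r. Qed.

Lemma Rbar_max_lub x y z : Rbar_le x z -> Rbar_le y z -> Rbar_le (Rbar_max x y) z.
Proof. destruct x, y, z; simpl; auto; try tauto. intros; apply Rmax_lub; auto. Qed.

Lemma Rbar_plus_le_compat_l x y y' : Rbar_le y y' -> Rbar_le (Rbar_plus x y) (Rbar_plus x y').
Proof. destruct x, y, y'; simpl; auto; try tauto; lra. Qed.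

Section SupInf.
Context {X : Type}.
Implicit Types (P : X -> Prop) (f : X -> Rbar).

Lemma supf_ub P f x y : P x -> y = f x -> Rbar_le y (supf P f).
Proof. intros Px ->. apply Rbar_sup_ub. eauto. Qed.

Lemma supf_lub P f z : (forall x, P x -> Rbar_le (f x) z) -> Rbar_le (supf P f) z.
Proof. intro Hz. apply Rbar_sup_lub. intros y [x [Px ->]]. auto. Qed.

Lemma inff_lb P f x : P x -> Rbar_le (inff P f) (f x).
Proof. intro Px. apply Rbar_inf_lb. eauto. Qed.

Lemma inff_lt P f c : Rbar_lt (inff P f) (Finite c) -> exists x, P x /\ Rbar_lt (f x) (Finite c).
Proof. intro Hc. destruct (Rbar_inf_lt _ _ Hc) as [y [[x [Px ->]] L]]. eauto. Qed.

(* Nonemptiness of [P] rules out the degenerate bounds [S = m_infty] and [K = m_infty]. *)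
Lemma supf_le_plus P (f g h : X -> R) S K :
  (exists x, P x) ->
  (forall x, P x -> f x <= g x + h x) ->
  (forall x, P x -> Rbar_le (Finite (g x)) S) ->
  (forall x, P x -> Rbar_le (Finite (h x)) K) ->
  Rbar_le (supf P (fun x => Finite (f x))) (Rbar_plus S K).
Proof.
  intros [x0 Px0] Hf Hg Hh.
  destruct S as [s| |];
    [|destruct (supf P _); exact I|exfalso; exact (Hg x0 Px0)].
  destruct K as [k| |];
    [|destruct (supf P _); exact I|exfalso; exact (Hh x0 Px0)].
  apply supf_lub. intros x Px. specialize (Hf x Px). specialize (Hg x Px).
  specialize (Hh x Px). simpl in *. lra.
Qed.

Lemma le_plus_inff P f x S I :
  S <> m_infty -> Rbar_le (inff P f) I ->
  (forall p, P p -> Rbar_le x (Rbar_plus S (f p))) ->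
  Rbar_le x (Rbar_plus S I).
Proof.
  intros HS HI Hx. destruct S as [s| |]; [|destruct x; simpl; auto|contradiction].
  apply Rbar_le_of_lt_Finite. intros t [Ht Hne].
  assert (Hlt : Rbar_lt (inff P f) (Finite (t - s))).
  { split.
    - eapply Rbar_le_trans; [exact HI|]. destruct I; simpl in *; auto; lra.
    - intro E. rewrite E in HI. destruct I; simpl in *; try contradiction.
      apply Hne. f_equal. lra. }
  destruct (inff_lt _ _ _ Hlt) as [p [Pp [Hp _]]].
  eapply Rbar_le_trans; [exact (Hx p Pp)|].
  destruct (f p); simpl in *; try contradiction; destruct x; simpl; auto; lra.
Qed.

End SupInf.

Lemma mkC_eq (a b c d : R) : a = c -> b = d -> mkC a b = mkC c d.
Proof. intros; subst; reflexivity. Qed.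

Lemma Cmod_RtoC (r : R) : Cmod (RtoC r) = Rabs r.
Proof. unfold Cmod, RtoC; simpl. rewrite Rmult_0_l, Rplus_0_r. apply sqrt_Rsqr_abs. Qed.

Lemma Cmod_RtoC_half : Cmod (RtoC (/ 2)) = / 2.
Proof. rewrite Cmod_RtoC. apply Rabs_right. lra. Qed.

Section CStarArith.
Context {A : CStarAlg}.
Implicit Types a b c d : A.

Lemma cadd_0_l a : cadd czero a = a.
Proof. rewrite cadd_comm; apply cadd_0. Qed.

Lemma cadd_opp_l a : cadd (copp a) a = czero.
Proof. rewrite cadd_comm; apply cadd_opp. Qed.

Lemma cadd_cancel_l a b c : cadd a b = cadd a c -> b = c.
Proof.
  intro E. assert (E' : cadd (copp a) (cadd a b) = cadd (copp a) (cadd a c)) by now rewrite E.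
  now rewrite !cadd_assoc, cadd_opp_l, !cadd_0_l in E'.
Qed.

Lemma copp_unique a b : cadd a b = czero -> b = copp a.
Proof. intro E. apply (cadd_cancel_l a). now rewrite E, cadd_opp. Qed.

Lemma copp_involutive a : copp (copp a) = a.
Proof. symmetry; apply copp_unique, cadd_opp_l. Qed.

Lemma copp_0 : copp (@czero A) = czero.
Proof. symmetry; apply copp_unique, cadd_0. Qed.

Lemma copp_add a b : copp (cadd a b) = cadd (copp a) (copp b).
Proof.
  symmetry; apply copp_unique.
  rewrite (cadd_assoc _ (cadd a b) (copp a) (copp b)).
  rewrite (cadd_comm _ a b), <- (cadd_assoc _ b a (copp a)), cadd_opp, cadd_0.
  apply cadd_opp.
Qed.

Lemma cmul_0_l a : cmul czero a = czero.
Proof. apply (cadd_cancel_l (cmul czero a)). now rewrite cadd_0, <- cmul_add_l, cadd_0. Qed.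

Lemma cmul_0_r a : cmul a czero = czero.
Proof. apply (cadd_cancel_l (cmul a czero)). now rewrite cadd_0, <- cmul_add_r, cadd_0. Qed.

Lemma cmul_opp_l a b : cmul (copp a) b = copp (cmul a b).
Proof. apply copp_unique. rewrite <- cmul_add_l, cadd_opp. apply cmul_0_l. Qed.

Lemma cmul_opp_r a b : cmul a (copp b) = copp (cmul a b).
Proof. apply copp_unique. rewrite <- cmul_add_r, cadd_opp. apply cmul_0_r. Qed.

Lemma cscal_C0 a : cscal C0 a = czero.
Proof.
  apply (cadd_cancel_l (cscal C0 a)). rewrite cadd_0, <- cscal_distr_r.
  f_equal. apply mkC_eq; simpl; ring.
Qed.

Lemma copp_scal a : copp a = cscal (RtoC (-1)) a.
Proof.
  symmetry; apply copp_unique. rewrite <- (cscal_1 _ a) at 1. rewrite <- cscal_distr_r.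
  rewrite <- (cscal_C0 a). f_equal. apply mkC_eq; simpl; ring.
Qed.

Lemma cadd_self a : cadd a a = cscal (RtoC 2) a.
Proof.
  rewrite <- (cscal_1 _ a) at 1 2. rewrite <- cscal_distr_r. f_equal.
  apply mkC_eq; simpl; ring.
Qed.

Lemma cstar_0 : cstar (@czero A) = czero.
Proof.
  apply (cadd_cancel_l (cstar (@czero A))). now rewrite cadd_0, <- cstar_add, cadd_0.
Qed.

Lemma cstar_opp a : cstar (copp a) = copp (cstar a).
Proof. apply copp_unique. rewrite <- cstar_add, cadd_opp. apply cstar_0. Qed.

Lemma cstar_one : cstar (@cone A) = cone.
Proof.
  pose proof (cstar_mul _ (@cone A) (cstar cone)) as E.
  rewrite cmul_1_l, cstar_invol, cmul_1_l in E. now symmetry.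
Qed.

Lemma cstar_scal_real (r : R) a : cstar (cscal (RtoC r) a) = cscal (RtoC r) (cstar a).
Proof. rewrite cstar_scal. f_equal. apply mkC_eq; simpl; ring. Qed.

Lemma sa_cmul_self a : sa a -> sa (cmul a a).
Proof. unfold sa. intro Ha. now rewrite cstar_mul, Ha. Qed.

Lemma cnorm_0 : cnorm (@czero A) = 0.
Proof. now apply cnorm_zero. Qed.

Lemma cnorm_opp a : cnorm (copp a) = cnorm a.
Proof.
  rewrite copp_scal, cnorm_scal, Cmod_RtoC, Rabs_left by lra. ring.
Qed.

Lemma cnorm_star a : cnorm (cstar a) = cnorm a.
Proof.
  assert (Hle : forall b : A, cnorm b <= cnorm (cstar b)).
  { intro b. pose proof (cnorm_cstar _ b). pose proof (cnorm_mul _ (cstar b) b).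
    pose proof (cnorm_nonneg _ b). pose proof (cnorm_nonneg _ (cstar b)).
    destruct (Req_dec (cnorm b) 0); nra. }
  apply Rle_antisym; [rewrite <- (cstar_invol _ a) at 2|]; apply Hle.
Qed.

Lemma cnorm_sa_sq a : sa a -> cnorm (cmul a a) = cnorm a * cnorm a.
Proof. intro Ha. rewrite <- (cnorm_cstar _ a), Ha. reflexivity. Qed.

Lemma cnorm_one_le : cnorm (@cone A) <= 1.
Proof.
  pose proof (cnorm_cstar _ (@cone A)) as E. rewrite cstar_one, cmul_1_l in E.
  pose proof (cnorm_nonneg _ (@cone A)). nra.
Qed.

Lemma csub_diag a : csub a a = czero.
Proof. apply cadd_opp. Qed.

Lemma csub_0_r a : csub a czero = a.
Proof. unfold csub. rewrite copp_0. apply cadd_0. Qed.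

Lemma csub_triangle a b c : cnorm (csub a c) <= cnorm (csub a b) + cnorm (csub b c).
Proof.
  replace (csub a c) with (cadd (csub a b) (csub b c)); [apply cnorm_triangle|].
  unfold csub. rewrite <- (cadd_assoc _ a (copp b)), (cadd_assoc _ (copp b) b), cadd_opp_l,
    cadd_0_l. reflexivity.
Qed.

Lemma cnorm_csub_sym a b : cnorm (csub a b) = cnorm (csub b a).
Proof.
  rewrite <- cnorm_opp. f_equal. unfold csub. rewrite copp_add, copp_involutive. apply cadd_comm.
Qed.

Lemma csub_eq_0 a b : csub a b = czero -> a = b.
Proof.
  intro E. apply copp_unique in E.
  rewrite <- (copp_involutive a), <- (copp_involutive b), E. reflexivity.
Qed.

Lemma eq_of_csub_small a b (K : R) :
  (forall eps, 0 < eps -> cnorm (csub a b) <= K * eps) -> a = b.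
Proof.
  intro Hs. apply csub_eq_0, cnorm_zero. pose proof (cnorm_nonneg _ (csub a b)).
  destruct (Req_dec (cnorm (csub a b)) 0) as [Z|Z]; [exact Z|exfalso].
  pose proof (Rabs_pos K). pose proof (Rle_abs K).
  set (e := cnorm (csub a b) / (2 * (Rabs K + 1))).
  assert (He : 0 < e) by (unfold e; apply Rdiv_lt_0_compat; lra).
  assert (Ke : K * e <= (Rabs K + 1) * e) by (apply Rmult_le_compat_r; lra).
  assert ((Rabs K + 1) * e = cnorm (csub a b) / 2) by (unfold e; field; lra).
  specialize (Hs e He). lra.
Qed.

Lemma csub_cadd_le a b c d :
  cnorm (csub (cadd a b) (cadd c d)) <= cnorm (csub a c) + cnorm (csub b d).
Proof.
  replace (csub (cadd a b) (cadd c d)) with (cadd (csub a c) (csub b d));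
    [apply cnorm_triangle|].
  unfold csub. rewrite copp_add, <- !cadd_assoc. f_equal.
  rewrite !cadd_assoc. f_equal. apply cadd_comm.
Qed.

Lemma csub_scal z a b : cnorm (csub (cscal z a) (cscal z b)) = Cmod z * cnorm (csub a b).
Proof.
  rewrite <- cnorm_scal. f_equal. unfold csub. rewrite cscal_distr_l. f_equal.
  rewrite !copp_scal, !cscal_assoc. f_equal. apply mkC_eq; simpl; ring.
Qed.

Lemma cmul_csub_l a b c : csub (cmul a b) (cmul a c) = cmul a (csub b c).
Proof. unfold csub. now rewrite cmul_add_r, cmul_opp_r. Qed.

Lemma cmul_csub_r a b c : csub (cmul a c) (cmul b c) = cmul (csub a b) c.
Proof. unfold csub. now rewrite cmul_add_l, cmul_opp_l. Qed.

Lemma csub_mul_le a b c d :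
  cnorm (csub (cmul a b) (cmul c d)) <= cnorm a * cnorm (csub b d) + cnorm (csub a c) * cnorm d.
Proof.
  eapply Rle_trans; [apply (csub_triangle _ (cmul a d))|].
  rewrite cmul_csub_l, cmul_csub_r. apply Rplus_le_compat; apply cnorm_mul.
Qed.

Lemma csub_star a b : cnorm (csub (cstar a) (cstar b)) = cnorm (csub a b).
Proof. unfold csub. rewrite <- cstar_opp, <- cstar_add. apply cnorm_star. Qed.

End CStarArith.

(** * Contractivity of unital *-morphisms *)

Section HalfSquareIteration.
Context {A : CStarAlg}.
Variable y : A.
Hypothesis y_small : cnorm y <= / 4.

(* x_{n+1} = (y + x_n^2) / 2 from x_0 = 0: its iterates stay in the ball of
   radius 1/2, on which the map is a contraction of ratio 1/2. *)
Fixpoint half_sq_iter (n : nat) : A :=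
  match n with
  | O => czero
  | S n => cscal (RtoC (/ 2)) (cadd y (cmul (half_sq_iter n) (half_sq_iter n)))
  end.

Lemma half_sq_iter_cnorm_le n : cnorm (half_sq_iter n) <= / 2.
Proof.
  induction n as [|n IH]; simpl; [rewrite cnorm_0; lra|].
  rewrite cnorm_scal, Cmod_RtoC_half.
  pose proof (cnorm_triangle _ y (cmul (half_sq_iter n) (half_sq_iter n))).
  pose proof (cnorm_mul _ (half_sq_iter n) (half_sq_iter n)).
  pose proof (cnorm_nonneg _ (half_sq_iter n)).
  pose proof (cnorm_nonneg _ (cmul (half_sq_iter n) (half_sq_iter n))). nra.
Qed.

Lemma half_sq_iter_succ_le n :
  cnorm (csub (half_sq_iter (S n)) (half_sq_iter n)) <= (/ 2) ^ n.
Proof.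
  induction n as [|n IH].
  - change (half_sq_iter 0) with (@czero A). rewrite csub_0_r. pose proof (half_sq_iter_cnorm_le 1). simpl in *. lra.
  - change (cnorm (csub (cscal (RtoC (/ 2)) (cadd y (cmul (half_sq_iter (S n)) (half_sq_iter (S n)))))
                        (cscal (RtoC (/ 2)) (cadd y (cmul (half_sq_iter n) (half_sq_iter n)))))
            <= (/ 2) ^ S n).
    rewrite csub_scal, Cmod_RtoC_half.
    pose proof (csub_cadd_le y (cmul (half_sq_iter (S n)) (half_sq_iter (S n)))
                  y (cmul (half_sq_iter n) (half_sq_iter n))) as Hadd.
    rewrite csub_diag, cnorm_0, Rplus_0_l in Hadd.
    pose proof (csub_mul_le (half_sq_iter (S n)) (half_sq_iter (S n))
                  (half_sq_iter n) (half_sq_iter n)) as Hmul.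
    pose proof (half_sq_iter_cnorm_le (S n)). pose proof (half_sq_iter_cnorm_le n).
    pose proof (cnorm_nonneg _ (csub (half_sq_iter (S n)) (half_sq_iter n))).
    change ((/ 2) ^ S n) with (/ 2 * (/ 2) ^ n). nra.
Qed.

Lemma half_sq_iter_cauchy n p :
  cnorm (csub (half_sq_iter (n + p)) (half_sq_iter n)) <= 2 * (/ 2) ^ n - 2 * (/ 2) ^ (n + p).
Proof.
  induction p as [|p IH].
  - rewrite Nat.add_0_r, csub_diag, cnorm_0. lra.
  - eapply Rle_trans; [apply (csub_triangle _ (half_sq_iter (n + p)))|].
    rewrite <- plus_n_Sm. pose proof (half_sq_iter_succ_le (n + p)).
    change ((/ 2) ^ S (n + p)) with (/ 2 * (/ 2) ^ (n + p)). lra.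
Qed.

Definition half_sq_iter_tends_to (l : A) : Prop :=
  forall eps, 0 < eps -> exists n,
    cnorm (csub (half_sq_iter n) l) < eps /\ cnorm (csub (half_sq_iter (S n)) l) < eps.

Lemma half_sq_iter_cvg : exists l, half_sq_iter_tends_to l.
Proof.
  destruct (ccomplete A half_sq_iter) as [l Hl].
  2:{ exists l. intros eps He. destruct (Hl eps He) as [N HN].
      exists N. split; apply HN; lia. }
  intros eps He.
  destruct (pow_lt_1_zero (/ 2) ltac:(rewrite Rabs_right; lra) (eps / 2) ltac:(lra))
    as [N HN].
  exists N.
  assert (Hle : forall m n, (N <= n <= m)%nat ->
            cnorm (csub (half_sq_iter m) (half_sq_iter n)) < eps).
  { intros m n [Hn Hm]. replace m with (n + (m - n))%nat by lia.
    pose proof (HN n Hn) as Hp. rewrite Rabs_right in Hp by (apply Rle_ge, pow_le; lra).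
    pose proof (pow_le (/ 2) (n + (m - n)) ltac:(lra)).
    pose proof (half_sq_iter_cauchy n (m - n)). lra. }
  intros m n Hm Hn. change (cnorm (csub (half_sq_iter m) (half_sq_iter n)) < eps).
  destruct (Nat.le_ge_cases n m); [|rewrite cnorm_csub_sym]; apply Hle; lia.
Qed.

Lemma half_sq_iter_sa n : sa y -> sa (half_sq_iter n).
Proof.
  unfold sa. intro Hy. induction n as [|n IH]; simpl; [apply cstar_0|].
  now rewrite cstar_scal_real, cstar_add, cstar_mul, IH, Hy.
Qed.

Lemma half_sq_iter_comm (h : A) n : cmul y h = cmul h y ->
  cmul (half_sq_iter n) h = cmul h (half_sq_iter n).
Proof.
  intro Hy. induction n as [|n IH]; simpl; [now rewrite cmul_0_l, cmul_0_r|].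
  rewrite cmul_scal_l, cmul_scal_r, cmul_add_l, cmul_add_r, Hy.
  now rewrite <- cmul_assoc, IH, cmul_assoc, IH, cmul_assoc.
Qed.

Section Limit.
Variable l : A.
Hypothesis l_lim : half_sq_iter_tends_to l.

Lemma half_sq_iter_limit_sa : sa y -> sa l.
Proof.
  intro Hsa. apply (eq_of_csub_small _ _ 2). intros eps He.
  destruct (l_lim eps He) as [n [H1 _]].
  eapply Rle_trans; [apply (csub_triangle _ (cstar (half_sq_iter n)))|].
  rewrite csub_star, (half_sq_iter_sa n Hsa), (cnorm_csub_sym (half_sq_iter n)) in *. lra.
Qed.

Lemma half_sq_iter_limit_comm (h : A) : cmul y h = cmul h y -> cmul l h = cmul h l.
Proof.
  intro Hc. apply (eq_of_csub_small _ _ (2 * cnorm h)). intros eps He.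
  destruct (l_lim eps He) as [n [H1 _]].
  eapply Rle_trans; [apply (csub_triangle _ (cmul (half_sq_iter n) h))|].
  pose proof (csub_mul_le l h (half_sq_iter n) h) as M1.
  pose proof (csub_mul_le h (half_sq_iter n) h l) as M2.
  rewrite (half_sq_iter_comm h n Hc), csub_diag, cnorm_0 in *.
  rewrite (cnorm_csub_sym l) in M1.
  pose proof (cnorm_nonneg _ h). pose proof (cnorm_nonneg _ l). nra.
Qed.

Lemma half_sq_iter_limit_fixpoint : l = cscal (RtoC (/ 2)) (cadd y (cmul l l)).
Proof.
  apply (eq_of_csub_small _ _ (2 + cnorm l)). intros eps He.
  destruct (l_lim eps He) as [n [H1 H2]].
  eapply Rle_trans; [apply (csub_triangle _ (half_sq_iter (S n)))|].
  assert (Hstep : cnorm (csub (half_sq_iter (S n)) (cscal (RtoC (/ 2)) (cadd y (cmul l l))))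
                  <= (cnorm l + 1) * eps).
  { change (half_sq_iter (S n))
      with (cscal (RtoC (/ 2)) (cadd y (cmul (half_sq_iter n) (half_sq_iter n)))).
    rewrite csub_scal, Cmod_RtoC_half.
    pose proof (csub_cadd_le y (cmul (half_sq_iter n) (half_sq_iter n)) y (cmul l l)) as Hadd.
    rewrite csub_diag, cnorm_0, Rplus_0_l in Hadd.
    pose proof (csub_mul_le (half_sq_iter n) (half_sq_iter n) l l) as Hmul.
    pose proof (half_sq_iter_cnorm_le n). pose proof (cnorm_nonneg _ l).
    pose proof (cnorm_nonneg _ (csub (half_sq_iter n) l)).
    pose proof (cnorm_nonneg _ (csub (cmul (half_sq_iter n) (half_sq_iter n)) (cmul l l))).
    nra. }
  rewrite cnorm_csub_sym in H2. pose proof (cnorm_nonneg _ l). lra.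
Qed.

Lemma half_sq_iter_limit_eq : cadd y (cmul l l) = cadd l l.
Proof.
  rewrite half_sq_iter_limit_fixpoint at 3 4. rewrite <- cscal_distr_r.
  rewrite <- (cscal_1 _ (cadd y (cmul l l))) at 1.
  f_equal. apply mkC_eq; simpl; field.
Qed.

End Limit.
End HalfSquareIteration.

Section SquareRoots.
Context {A : CStarAlg}.
Implicit Types y l k m : A.

Lemma cadd_sq_one_sub y l : cadd y (cmul l l) = cadd l l ->
  cadd y (cmul (csub cone l) (csub cone l)) = cone.
Proof.
  intro E.
  assert (Esq : cmul (csub cone l) (csub cone l) = cadd (csub cone l) (csub (cmul l l) l)).
  { unfold csub. rewrite cmul_add_r, cmul_1_r, cmul_opp_r, cmul_add_l, cmul_1_l, cmul_opp_l,
      copp_add, copp_involutive. f_equal. apply cadd_comm. }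
  rewrite Esq. unfold csub.
  rewrite (cadd_assoc _ (cadd cone (copp l)) (cmul l l) (copp l)).
  rewrite <- (cadd_assoc _ cone (copp l) (cmul l l)), (cadd_comm _ (copp l) (cmul l l)),
    (cadd_assoc _ cone (cmul l l) (copp l)).
  rewrite <- (cadd_assoc _ (cadd cone (cmul l l)) (copp l) (copp l)).
  rewrite (cadd_assoc _ y (cadd cone (cmul l l))).
  rewrite (cadd_comm _ cone (cmul l l)), (cadd_assoc _ y (cmul l l) cone), E.
  rewrite <- copp_add, (cadd_comm _ (cadd l l) cone), <- cadd_assoc, cadd_opp, cadd_0.
  reflexivity.
Qed.

Lemma exists_sqrt_one_sub y (h : A) :
  sa y -> cmul y h = cmul h y -> cnorm y <= / 4 ->
  exists w, sa w /\ cmul w h = cmul h w /\ cadd y (cmul w w) = cone.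
Proof.
  intros Hsa Hc Hy. destruct (half_sq_iter_cvg y Hy) as [l Hl].
  exists (csub cone l). split; [|split].
  - pose proof (half_sq_iter_limit_sa y l Hl Hsa) as Hlsa.
    unfold sa, csub in *. now rewrite cstar_add, cstar_opp, cstar_one, Hlsa.
  - unfold csub. now rewrite cmul_add_l, cmul_add_r, cmul_opp_l, cmul_opp_r, cmul_1_l,
      cmul_1_r, (half_sq_iter_limit_comm y l Hl h Hc).
  - apply cadd_sq_one_sub, (half_sq_iter_limit_eq y Hy l Hl).
Qed.

(* [z = k + i m] satisfies [z^* z = k^2 + m^2 = 1], so [|z| <= 1], and [2 k = z + z^*]. *)
Lemma cnorm_le_1_of_sq_add_sq k m : sa k -> sa m -> cmul k m = cmul m k ->
  cadd (cmul k k) (cmul m m) = cone -> cnorm k <= 1.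
Proof.
  intros Hk Hm Hc E.
  set (z := cadd k (cscal (mkC 0 1) m)).
  assert (Zs : cstar z = cadd k (cscal (mkC 0 (-1)) m)).
  { unfold z. rewrite cstar_add, cstar_scal, Hk, Hm. reflexivity. }
  assert (ZZ : cmul (cstar z) z = cone).
  { rewrite Zs. unfold z. rewrite cmul_add_l, !cmul_add_r, !cmul_scal_l, !cmul_scal_r,
      cscal_assoc, Hc, <- E, <- cadd_assoc. f_equal.
    rewrite (cadd_assoc _ (cscal (mkC 0 1) (cmul m k))), <- cscal_distr_r.
    replace (Cadd (mkC 0 1) (mkC 0 (-1))) with C0 by (apply mkC_eq; simpl; ring).
    rewrite cscal_C0, cadd_0_l.
    replace (Cmul (mkC 0 (-1)) (mkC 0 1)) with Defs.C1 by (apply mkC_eq; simpl; ring).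
    apply cscal_1. }
  assert (Nz : cnorm z <= 1).
  { pose proof (cnorm_cstar _ z) as Ez. rewrite ZZ in Ez. pose proof (@cnorm_one_le A).
    pose proof (cnorm_nonneg _ z). nra. }
  assert (S : cadd z (cstar z) = cscal (RtoC 2) k).
  { rewrite Zs. unfold z. rewrite <- cadd_self, <- !cadd_assoc. f_equal.
    rewrite (cadd_comm _ k (cscal (mkC 0 (-1)) m)), !cadd_assoc, <- cscal_distr_r.
    replace (Cadd (mkC 0 1) (mkC 0 (-1))) with C0 by (apply mkC_eq; simpl; ring).
    now rewrite cscal_C0, cadd_0_l. }
  pose proof (cnorm_triangle _ z (cstar z)) as T.
  rewrite S, cnorm_scal, Cmod_RtoC, cnorm_star, Rabs_right in T by lra. lra.
Qed.

End SquareRoots.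

Fixpoint sq_iter {A : CStarAlg} (x : A) (n : nat) : A :=
  match n with O => x | S n => cmul (sq_iter x n) (sq_iter x n) end.

Lemma sq_iter_sa {A : CStarAlg} (x : A) n : sa x -> sa (sq_iter x n).
Proof. intro Hx. induction n; simpl; auto. now apply sa_cmul_self. Qed.

Lemma cnorm_sq_iter_S {A : CStarAlg} (x : A) n : sa x ->
  cnorm (sq_iter x (S n)) = cnorm (sq_iter x n) * cnorm (sq_iter x n).
Proof. intro Hx. apply cnorm_sa_sq, sq_iter_sa, Hx. Qed.

Lemma two_pow_gt (e : R) : 0 < e -> exists n, 1 < 2 ^ n * e.
Proof.
  intro He. destruct (archimed_cor1 e He) as [n [Hn Hn0]].
  exists n. assert (INR n <= 2 ^ n).
  { clear. induction n; [simpl; lra|]. rewrite S_INR. simpl.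
    assert (1 <= 2 ^ n) by (apply pow_R1_Rle; lra). lra. }
  assert (0 < INR n) by (apply lt_0_INR; lia).
  assert (1 < INR n * e).
  { apply (Rmult_lt_compat_l (INR n)) in Hn; [|lra]. rewrite Rinv_r in Hn by lra. lra. }
  nra.
Qed.

(* If [c_0 = (1 + e) d_0] with [e > 0], Bernoulli gives [c_n >= (1 + 2^n e) d_n],
   which eventually beats the constant 2. *)
Lemma le_of_squarings_le_2 (c d : nat -> R) :
  (forall n, 0 <= c n) -> (forall n, 0 <= d n) ->
  (forall n, c (S n) = c n * c n) -> (forall n, d (S n) = d n * d n) ->
  (forall n, c n <= 2 * d n) -> c 0%nat <= d 0%nat.
Proof.
  intros Pc Pd Sc Sd B.
  destruct (Rle_or_lt (c 0%nat) (d 0%nat)) as [L|L]; [exact L|exfalso].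
  destruct (Req_dec (d 0%nat) 0) as [Z|Z]; [specialize (B 0%nat); lra|].
  pose proof (Pd 0%nat) as P0.
  set (e := c 0%nat / d 0%nat - 1).
  assert (He : 0 < e).
  { unfold e. enough (1 < c 0%nat / d 0%nat) by lra. apply (Rmult_lt_reg_r (d 0%nat)); [lra|].
    unfold Rdiv. rewrite Rmult_assoc, Rinv_l by lra. lra. }
  assert (Bern : forall n, (1 + 2 ^ n * e) * d n <= c n).
  { induction n as [|n IH].
    - unfold e, Rdiv. simpl.
      replace ((1 + 1 * (c 0%nat * / d 0%nat - 1)) * d 0%nat)
        with (c 0%nat * (/ d 0%nat * d 0%nat)) by ring.
      rewrite Rinv_l by lra. lra.
    - rewrite Sc, Sd. pose proof (Pd n). pose proof (pow_le 2 n ltac:(lra)).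
      assert (0 <= (1 + 2 ^ n * e) * d n) by (apply Rmult_le_pos; nra).
      assert ((1 + 2 ^ n * e) * d n * ((1 + 2 ^ n * e) * d n) <= c n * c n)
        by (apply Rmult_le_compat; lra).
      simpl. nra. }
  destruct (two_pow_gt e He) as [n Hn].
  assert (Hdn : 0 < d n).
  { clear -Z Pd Sd. induction n; [pose proof (Pd 0%nat); lra|]. rewrite Sd. nra. }
  specialize (Bern n). specialize (B n). nra.
Qed.

Section StarMorphism.
Context {A B : CStarAlg} (pi : A -> B).
Hypothesis pi_add : forall a b, pi (cadd a b) = cadd (pi a) (pi b).
Hypothesis pi_scal : forall z a, pi (cscal z a) = cscal z (pi a).
Hypothesis pi_mul : forall a b, pi (cmul a b) = cmul (pi a) (pi b).
Hypothesis pi_star : forall a, pi (cstar a) = cstar (pi a).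
Hypothesis pi_one : pi cone = cone.

Lemma morph_0 : pi czero = czero.
Proof. apply (cadd_cancel_l (pi czero)). now rewrite <- pi_add, !cadd_0. Qed.

Lemma morph_csub a b : pi (csub a b) = csub (pi a) (pi b).
Proof.
  unfold csub. rewrite pi_add. f_equal.
  apply copp_unique. now rewrite <- pi_add, cadd_opp, morph_0.
Qed.

Lemma morph_sa a : sa a -> sa (pi a).
Proof. unfold sa. intro Ha. now rewrite <- pi_star, Ha. Qed.

(* Rescale [h] to norm 1/2 and let [w = sqrt (1 - h^2)]: then [pi h], [pi w] are
   commuting self-adjoint elements with [(pi h)^2 + (pi w)^2 = 1]. *)
Lemma morph_cnorm_sa_le_2 h : sa h -> cnorm (pi h) <= 2 * cnorm h.
Proof.
  intros Hh. pose proof (cnorm_nonneg _ h) as N0.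
  destruct (Req_dec (cnorm h) 0) as [Z|Z].
  { apply cnorm_zero in Z. subst h. rewrite morph_0, !cnorm_0. lra. }
  set (c := / (2 * cnorm h)).
  assert (Hc : 0 < c) by (apply Rinv_0_lt_compat; lra).
  set (h' := cscal (RtoC c) h).
  assert (Nh' : cnorm h' = / 2).
  { unfold h'. rewrite cnorm_scal, Cmod_RtoC, Rabs_right by lra. unfold c. field. lra. }
  assert (Sh' : sa h') by (unfold h', sa; now rewrite cstar_scal_real, Hh).
  destruct (exists_sqrt_one_sub (cmul h' h') h') as [w [Sw [Cw Ew]]].
  - now apply sa_cmul_self.
  - now rewrite cmul_assoc.
  - rewrite cnorm_sa_sq, Nh' by exact Sh'. lra.
  - assert (Hle : cnorm (pi h') <= 1).
    { apply (cnorm_le_1_of_sq_add_sq (pi h') (pi w)); try now apply morph_sa.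
      - now rewrite <- !pi_mul, Cw.
      - now rewrite <- !pi_mul, <- pi_add, Ew. }
    unfold h' in Hle. rewrite pi_scal, cnorm_scal, Cmod_RtoC, Rabs_right in Hle by lra.
    unfold c in Hle. pose proof (cnorm_nonneg _ (pi h)).
    apply (Rmult_le_compat_l (2 * cnorm h)) in Hle; [|lra].
    rewrite <- Rmult_assoc, Rinv_r in Hle by lra. lra.
Qed.

Lemma morph_sq_iter x n : pi (sq_iter x n) = sq_iter (pi x) n.
Proof. induction n; simpl; auto. now rewrite pi_mul, IHn. Qed.

(* The constant 2 disappears on passing to [h^(2^n)], whose norm is [|h|^(2^n)]. *)
Lemma morph_cnorm_sa_le h : sa h -> cnorm (pi h) <= cnorm h.
Proof.
  intro Hh.
  apply (le_of_squarings_le_2 (fun n => cnorm (sq_iter (pi h) n)) (fun n => cnorm (sq_iter h n))).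
  - intro; apply cnorm_nonneg.
  - intro; apply cnorm_nonneg.
  - intro n. apply cnorm_sq_iter_S, morph_sa, Hh.
  - intro n. apply cnorm_sq_iter_S, Hh.
  - intro n. rewrite <- morph_sq_iter. apply morph_cnorm_sa_le_2, sq_iter_sa, Hh.
Qed.

Lemma morph_cnorm_le a : cnorm (pi a) <= cnorm a.
Proof.
  assert (Hle : cnorm (pi (cmul (cstar a) a)) <= cnorm (cmul (cstar a) a)).
  { apply morph_cnorm_sa_le. unfold sa. now rewrite cstar_mul, cstar_invol. }
  rewrite pi_mul, pi_star, !cnorm_cstar in Hle.
  pose proof (cnorm_nonneg _ a). pose proof (cnorm_nonneg _ (pi a)). nra.
Qed.

Lemma morph_csub_le a b : cnorm (csub (pi a) (pi b)) <= cnorm (csub a b).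
Proof. rewrite <- morph_csub. apply morph_cnorm_le. Qed.

End StarMorphism.

(** * Bridges *)

Lemma unital_inj_star_morphism_csub_le {A B : CStarAlg} (pi : A -> B) :
  unital_inj_star_morphism pi -> forall a b, cnorm (csub (pi a) (pi b)) <= cnorm (csub a b).
Proof. intros [Ha [Hs [Hm [Hst [H1 _]]]]]. exact (morph_csub_le pi Ha Hs Hm Hst H1). Qed.

Lemma csub_inner_swap {A : CStarAlg} (M : HilbertModule A) (u v w : M) :
  cnorm (csub (inner w u) (inner w v)) = cnorm (csub (inner u w) (inner v w)).
Proof. rewrite <- (inner_star M u w), <- (inner_star M v w). apply csub_star. Qed.

Lemma kmod_sym {F G H} (O : MQVB F G H) u v : Rbar_le (kmod O u v) (kmod O v u).
Proof.
  apply supf_lub. intros xi Hxi. apply (supf_ub _ _ xi); [exact Hxi|].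
  now rewrite cnorm_csub_sym.
Qed.

Section Bridge.
Context {F : R -> R -> R -> R -> R} {G : R -> R -> R -> R} {H : R -> R -> R}.
Context {OA OB : MQVB F G H} (g : ModBridge OA OB).

Lemma bn_le a a' b b' : bn g a b <= bn g a' b' + cnorm (csub a a') + cnorm (csub b b').
Proof.
  unfold bn.
  eapply Rle_trans; [apply (csub_triangle _ (cmul (piA g a') (pivot g)))|].
  eapply Rle_trans; [apply Rplus_le_compat_l, (csub_triangle _ (cmul (pivot g) (piB g b')))|].
  rewrite cmul_csub_r, cmul_csub_l, (cnorm_csub_sym b).
  pose proof (cnorm_mul _ (csub (piA g a) (piA g a')) (pivot g)).
  pose proof (cnorm_mul _ (pivot g) (csub (piB g b') (piB g b))).
  pose proof (unital_inj_star_morphism_csub_le _ (piA_morph g) a a').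
  pose proof (unital_inj_star_morphism_csub_le _ (piB_morph g) b' b).
  rewrite pivot_norm in *. lra.
Qed.

Definition deck_term (u : bmod OA) (v : bmod OB) (k : brJ g) : R :=
  Rmax (bn g (inner u (anchor g k)) (inner v (coanchor g k)))
       (bn g (inner (anchor g k) u) (inner (coanchor g k) v)).

Lemma dn_deck_term u v : dn g u v = supf (fun _ => True) (fun k => Finite (deck_term u v k)).
Proof. reflexivity. Qed.

Lemma deck_term_le u u' v v' k :
  deck_term u v k <= deck_term u' v' k
    + cnorm (csub (inner u (anchor g k)) (inner u' (anchor g k)))
    + cnorm (csub (inner v (coanchor g k)) (inner v' (coanchor g k))).
Proof.
  unfold deck_term.
  pose proof (bn_le (inner u (anchor g k)) (inner u' (anchor g k))
                (inner v (coanchor g k)) (inner v' (coanchor g k))).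
  pose proof (bn_le (inner (anchor g k) u) (inner (anchor g k) u')
                (inner (coanchor g k) v) (inner (coanchor g k) v')).
  rewrite !csub_inner_swap in *.
  pose proof (Rmax_l (bn g (inner u' (anchor g k)) (inner v' (coanchor g k)))
                     (bn g (inner (anchor g k) u') (inner (coanchor g k) v'))).
  pose proof (Rmax_r (bn g (inner u' (anchor g k)) (inner v' (coanchor g k)))
                     (bn g (inner (anchor g k) u') (inner (coanchor g k) v'))).
  apply Rmax_lub; lra.
Qed.

Lemma deck_term_le_reach_sharp j k :
  Rbar_le (Finite (deck_term (anchor g j) (coanchor g j) k)) (reach_sharp g).
Proof.
  apply (Rbar_le_trans _ (dn g (anchor g j) (coanchor g j))).
  - now apply (supf_ub _ _ k).
  - now apply (supf_ub _ _ j).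
Qed.

Lemma dn_coanchor_le u j :
  Rbar_le (dn g u (coanchor g j)) (Rbar_plus (reach_sharp g) (kmod OA u (anchor g j))).
Proof.
  rewrite dn_deck_term.
  apply (supf_le_plus _ _ (deck_term (anchor g j) (coanchor g j))
           (fun k => cnorm (csub (inner u (anchor g k)) (inner (anchor g j) (anchor g k))))).
  - destruct (brJ_ne g) as [k]. now exists k.
  - intros k _. pose proof (deck_term_le u (anchor g j) (coanchor g j) (coanchor g j) k).
    rewrite csub_diag, cnorm_0 in *. lra.
  - intros k _. apply deck_term_le_reach_sharp.
  - intros k _. apply (supf_ub _ _ (anchor g k)); [apply anchor_D1|reflexivity].
Qed.

Lemma dn_anchor_le v j :
  Rbar_le (dn g (anchor g j) v) (Rbar_plus (reach_sharp g) (kmod OB v (coanchor g j))).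
Proof.
  rewrite dn_deck_term.
  apply (supf_le_plus _ _ (deck_term (anchor g j) (coanchor g j))
           (fun k => cnorm (csub (inner v (coanchor g k)) (inner (coanchor g j) (coanchor g k))))).
  - destruct (brJ_ne g) as [k]. now exists k.
  - intros k _. pose proof (deck_term_le (anchor g j) (anchor g j) v (coanchor g j) k).
    rewrite csub_diag, cnorm_0 in *. lra.
  - intros k _. apply deck_term_le_reach_sharp.
  - intros k _. apply (supf_ub _ _ (coanchor g k)); [apply coanchor_D1|reflexivity].
Qed.

Lemma reach_sharp_neq_m_infty : reach_sharp g <> m_infty.
Proof.
  destruct (brJ_ne g) as [j]. intro E.
  pose proof (deck_term_le_reach_sharp j j) as Hj. now rewrite E in Hj.
Qed.

Lemma inff_D1_dn_le_reach_l u : D1 OA u -> Rbar_le (inff (D1 OB) (dn g u)) (reach g).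
Proof.
  intro Du. eapply Rbar_le_trans; [|apply Rbar_max_r].
  apply (le_plus_inff (fun a => exists j, a = anchor g j) (fun a => kmod OA a u)).
  - apply reach_sharp_neq_m_infty.
  - eapply Rbar_le_trans; [|apply Rbar_max_l].
    eapply Rbar_le_trans; [|apply Rbar_max_r]. now apply (supf_ub _ _ u).
  - intros a [j ->].
    eapply Rbar_le_trans; [apply (inff_lb _ _ (coanchor g j)), coanchor_D1|].
    eapply Rbar_le_trans; [apply dn_coanchor_le|].
    apply Rbar_plus_le_compat_l, kmod_sym.
Qed.

Lemma inff_D1_dn_le_reach_r v : D1 OB v -> Rbar_le (inff (D1 OA) (fun u => dn g u v)) (reach g).
Proof.
  intro Dv. eapply Rbar_le_trans; [|apply Rbar_max_r].
  apply (le_plus_inff (fun b => exists j, b = coanchor g j) (fun b => kmod OB b v)).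
  - apply reach_sharp_neq_m_infty.
  - eapply Rbar_le_trans; [|apply Rbar_max_r].
    eapply Rbar_le_trans; [|apply Rbar_max_r]. now apply (supf_ub _ _ v).
  - intros b [j ->].
    eapply Rbar_le_trans; [apply (inff_lb _ _ (anchor g j)), anchor_D1|].
    eapply Rbar_le_trans; [apply dn_anchor_le|].
    apply Rbar_plus_le_compat_l, kmod_sym.
Qed.

End Bridge.

Theorem mainTheorem4
  (F : R -> R -> R -> R -> R) (G : R -> R -> R -> R) (H : R -> R -> R)
  (HFGH : admissible_triple F G H)
  (OA OB : MQVB F G H) (g : ModBridge OA OB) :
  (forall (u : bmod OA) (j : brJ g),
      D1 OA u -> Rbar_le (kmod OA u (anchor g j)) (imprint g) ->
      Rbar_le (dn g u (coanchor g j)) (reach g)) /\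
  (forall (v : bmod OB) (j : brJ g),
      D1 OB v -> Rbar_le (kmod OB v (coanchor g j)) (imprint g) ->
      Rbar_le (dn g (anchor g j) v) (reach g)) /\
  Rbar_le
    (Rbar_max
      (Rbar_max (supf (Lball OA) (fun a => inff (Lball OB) (fun b => Finite (bn g a b))))
                (supf (Lball OB) (fun b => inff (Lball OA) (fun a => Finite (bn g a b)))))
      (Rbar_max (supf (D1 OA) (fun u => inff (D1 OB) (fun v => dn g u v)))
                (supf (D1 OB) (fun v => inff (D1 OA) (fun u => dn g u v)))))
    (reach g).
Proof.
  split; [|split].
  - intros u j _ Hk. eapply Rbar_le_trans; [apply dn_coanchor_le|].
    eapply Rbar_le_trans; [apply Rbar_plus_le_compat_l, Hk|apply Rbar_max_r].
  - intros v j _ Hk. eapply Rbar_le_trans; [apply dn_anchor_le|].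
    eapply Rbar_le_trans; [apply Rbar_plus_le_compat_l, Hk|apply Rbar_max_r].
  - apply Rbar_max_lub; [apply (Rbar_max_l (reach_flat g))|apply Rbar_max_lub].
    + apply supf_lub. apply inff_D1_dn_le_reach_l.
    + apply supf_lub. apply inff_D1_dn_le_reach_r.
Qed.
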